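(* Let $u_0 \ge 1$ and $r \ge 1$ be integers with $\gcd(u_0, r) = 1$, let $u_k := u_0 + kr$ for $k \ge 0$, and for an integer $n \ge 0$ let $L_n := \operatorname{lcm}\{u_0, u_1, \ldots, u_n\}$. Let $a \ge 2$ be any given integer. Then for any integers $\alpha \ge a$, $r \ge a$ and $n \ge 2\alpha r$, we have $$L_n \ge u_0\, r^{\alpha + a - 2}\,(r+1)^n.$$
   Context: The arithmetic progression is $u_k = u_0 + kr$ with $u_0, r$ positive coprime integers; $L_n$ is the least common multiple of its first $n+1$ terms $u_0,\dots,u_n$. *)

From mathcomp Require Import all_boot.
Set Implicit Arguments. Unset Strict Implicit. Unset Printing Implicit Defensive.

Definition u (u0 r k : nat) : nat := u0 + k * r.

Definition L (u0 r n : nat) : nat := \big[lcmn/1]_(0 <= k < n.+1) u u0 r k.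

From Pilot Require Import Defs.
From mathcomp Require Import all_boot.
From mathcomp Require Import zify ring.

Set Implicit Arguments.
Unset Strict Implicit.
Unset Printing Implicit Defensive.

(* The product P_{k,m} := u_k u_{k+1} ... u_{k+m} ([uprod k m]) of m+1 terms
   divides m! r^m lcm(u_k, ..., u_{k+m}), and is coprime to r, so it divides
   m! L_n whenever k + m <= n. For every n some window with k + m = n has
   u_0 (r+1)^n m! <= P_{k,m} and (r+1) k <= n + r, so m >= (alpha + a - 2) r
   and r^(alpha + a - 2) divides m!; the factor m! then cancels. *)

Lemma fact_dvd_fact m n : m <= n -> m`! %| n`!.
Proof.
by move=> le_mn; rewrite -(ffact_fact (leq_subr m n)) subKn // dvdn_mull.
Qed.

Lemma expn_dvd_fact r e : 0 < r -> r ^ e %| (e * r)`!.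
Proof.
move=> r_gt0; elim: e => [|e IHe]; first by rewrite dvd1n.
have -> : e.+1 * r = (e * r + r.-1).+1 by lia.
rewrite factS expnS; apply: dvdn_mul; first by apply/dvdnP; exists e.+1; lia.
exact: dvdn_trans IHe (fact_dvd_fact (leq_addr _ _)).
Qed.

Section ProgressionProducts.

Variables u0 r : nat.

Local Notation u := (u u0 r).

Definition uprod (k m : nat) : nat := \prod_(j < m.+1) u (k + j).

Lemma uprodSr k m : uprod k m.+1 = uprod k m * u (k + m.+1).
Proof. by rewrite /uprod big_ord_recr. Qed.

Lemma uprodSl k m : uprod k m.+1 = u k * uprod k.+1 m.
Proof.
rewrite /uprod big_ord_recl addn0; congr (_ * _).
by apply: eq_bigr => j _; rewrite lift0 addSnnS.
Qed.

(* P_{k,m+1} / u_{k+m+1} and P_{k,m+1} / u_k both divide m! r^m M, and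
   u_{k+m+1} - u_k = (m+1) r. *)
Lemma uprod_dvd_fact_expn M m k :
  (forall j, j <= m -> u (k + j) %| M) -> uprod k m %| m`! * r ^ m * M.
Proof.
elim: m k => [|m IHm] k uM.
  by rewrite /uprod big_ord1 fact0 expn0 !mul1n; apply: (uM 0).
have /dvdnP [a Ea] : uprod k m %| m`! * r ^ m * M.
  by apply: IHm => j le_jm; apply: uM; apply: leqW.
have /dvdnP [b Eb] : uprod k.+1 m %| m`! * r ^ m * M.
  by apply: IHm => j le_jm; rewrite addSnnS; apply: uM.
set X := m`! * r ^ m * M.
have Ea' : uprod k m.+1 * a = X * u (k + m.+1) by rewrite uprodSr /X Ea; ring.
have Eb' : uprod k m.+1 * b = X * u k by rewrite uprodSl /X Eb; ring.
have -> : m.+1`! * r ^ m.+1 * M = uprod k m.+1 * a - uprod k m.+1 * b.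
  rewrite Ea' Eb' factS expnS.
  have -> : u (k + m.+1) = u k + m.+1 * r by rewrite /Defs.u; lia.
  by rewrite mulnDr addKn /X; ring.
by apply: dvdn_sub; apply: dvdn_mulr.
Qed.

Lemma u_dvd_L n i : i <= n -> u i %| L u0 r n.
Proof.
elim: n => [|n IHn] le_in.
  by move: le_in; rewrite leqn0 => /eqP ->; rewrite /L big_nat1.
rewrite /L big_nat_recr //= -/(L u0 r n).
case: (ltnP i n.+1) => [lt_in | le_ni].
  exact: dvdn_trans (IHn lt_in) (dvdn_lcml _ _).
have -> : i = n.+1 by lia.
exact: dvdn_lcmr.
Qed.

Hypothesis u0_gt0 : 0 < u0.

Lemma u_gt0 k : 0 < u k.
Proof. by rewrite /Defs.u; lia. Qed.

Lemma L_gt0 n : 0 < L u0 r n.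
Proof.
rewrite /L; elim/big_ind: _ => // [x y x_gt0 y_gt0|k _].
  by rewrite lcmn_gt0 x_gt0 y_gt0.
exact: u_gt0.
Qed.

(* Induction on n with the extra invariant n < u_0 + (r+1) k. If it survives
   the step to n + 1, extend the window to the right, gaining a factor
   u_{k+m+1} >= (r+1)(m+1); otherwise u_0 + (r+1) k = n + 1, which means
   u_{k+m+1} = (r+1) u_k, and sliding the window gains a factor r + 1. *)
Lemma uprod_growth n : 0 < r -> exists k m,
  [/\ k + m = n, (r + 1) * k <= n + r & u0 * (r + 1) ^ n * m`! <= uprod k m].
Proof.
move=> r_gt0.
suff [k [m [Ekm lt_n_uk le_k growth]]] : exists k m, [/\ k + m = n,
    n < u0 + (r + 1) * k, (r + 1) * k <= n + r
  & u0 * (r + 1) ^ n * m`! <= uprod k m] by exists k, m.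
elim: n => [|n [k [m [Ekm lt_n_uk le_k growth]]]].
  by exists 0, 0; rewrite /uprod big_ord1 expn0 fact0 /Defs.u; split; lia.
have expnS_u0 : u0 * (r + 1) ^ n.+1 = (r + 1) * (u0 * (r + 1) ^ n) by rewrite expnS; ring.
case: (ltnP n.+1 (u0 + (r + 1) * k)) => [lt_n1_uk | le_uk_n1].
  exists k, m.+1; split; [lia | lia | lia |].
  rewrite uprodSr factS expnS_u0.
  have -> : (r + 1) * (u0 * (r + 1) ^ n) * (m.+1 * m`!)
      = u0 * (r + 1) ^ n * m`! * ((r + 1) * m.+1) by ring.
  by apply: leq_mul growth _; rewrite /Defs.u; nia.
exists k.+1, m; split; [lia | lia | lia |].
have shift : u (k + m.+1) = (r + 1) * u k by rewrite /Defs.u; nia.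
have -> : uprod k.+1 m = (r + 1) * uprod k m.
  apply/eqP; rewrite -(eqn_pmul2l (u_gt0 k)) -uprodSl uprodSr shift; apply/eqP; ring.
by rewrite expnS_u0 -mulnA leq_pmul2l // addn1.
Qed.

Hypothesis coprime_u0r : coprime u0 r.

Lemma coprime_u k : coprime (u k) r.
Proof. by rewrite /coprime gcdnC /Defs.u addnC gcdnMDl gcdnC. Qed.

Lemma coprime_uprod k m : coprime (uprod k m) r.
Proof.
rewrite /uprod; elim/big_ind: _ => [||j _]; first exact: coprime1n.
  by move=> x y cxr cyr; rewrite coprimeMl cxr cyr.
exact: coprime_u.
Qed.

Lemma uprod_dvd_fact_L n k m : k + m <= n -> uprod k m %| m`! * L u0 r n.
Proof.
move=> le_kmn; rewrite -(@Gauss_dvdl _ _ (r ^ m)); last first.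
  by apply: coprimeXr; apply: coprime_uprod.
by rewrite mulnAC; apply: uprod_dvd_fact_expn => j le_jm; apply: u_dvd_L; lia.
Qed.

Lemma expn_uprod_le_fact_L n k m e :
  k + m <= n -> r ^ e %| m`! -> r ^ e * uprod k m <= m`! * L u0 r n.
Proof.
move=> le_kmn /dvdnP [c fact_m].
have c_gt0 : 0 < c by move: (fact_gt0 m); rewrite fact_m muln_gt0 => /andP [].
have P_dvd : uprod k m %| c * L u0 r n.
  rewrite -(@Gauss_dvdl _ _ (r ^ e)); last by apply: coprimeXr; apply: coprime_uprod.
  by rewrite mulnAC -fact_m; apply: uprod_dvd_fact_L.
rewrite fact_m [c * _]mulnC -mulnA leq_mul2l (dvdn_leq _ P_dvd) ?orbT //.
by rewrite muln_gt0 c_gt0 L_gt0.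
Qed.

End ProgressionProducts.

Theorem theorem1p2 (u0 r a alpha n : nat) :
  1 <= u0 -> 1 <= r -> coprime u0 r ->
  2 <= a -> a <= alpha -> a <= r -> 2 * alpha * r <= n ->
  u0 * r ^ (alpha + a - 2) * (r + 1) ^ n <= L u0 r n.
Proof.
move=> u0_gt0 r_gt0 co_u0r a_ge2 le_a_alpha le_ar le_n.
have [k [m [Ekm le_k growth]]] := uprod_growth u0_gt0 n r_gt0.
set e := alpha + a - 2.
have le_erm : e * r <= m.
  have lt_en : (r + 1) * e < n by rewrite /e; nia.
  nia.
have re_dvd : r ^ e %| m`!.
  exact: dvdn_trans (expn_dvd_fact e r_gt0) (fact_dvd_fact le_erm).
have bound := expn_uprod_le_fact_L u0_gt0 co_u0r (eq_leq Ekm) re_dvd.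
rewrite -(leq_pmul2l (fact_gt0 m)); apply: leq_trans bound.
have -> : m`! * (u0 * r ^ e * (r + 1) ^ n) = r ^ e * (u0 * (r + 1) ^ n * m`!) by ring.
by rewrite leq_pmul2l ?expn_gt0 ?r_gt0.
Qed.
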